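(* Let $G$ be a connected graph with $n$ vertices and $k\ge1$. Let $W_k(G)$ be the sum of the spanning tree weights of all connected $k$-partitions of $G$. Then $$n^{-2(k-1)}\le \frac{W_k(G)}{\tau(G)}\le n^{2(k-1)}.$$
   Context: A connected $k$-partition of $G=(V,E)$ is a partition of $V$ into $k$ nonempty sets (pieces) each inducing a connected subgraph. For a graph $H$, $\tau(H)$ is its number of spanning trees, and the spanning tree weight of a connected partition $P$ is $\prod_{S\in P}\tau(G[S])$. *)

From mathcomp Require Import all_boot all_order all_algebra.
Set Implicit Arguments. Unset Strict Implicit. Unset Printing Implicit Defensive.
Import Order.TTheory GRing.Theory Num.Theory.

(* A simple graph on a finite vertex type T is a symmetric irreflexive
   relation e.  Edges are represented as 2-element vertex sets {x,y}. *)
Definition simple_graph (T : finType) (e : rel T) : Prop :=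
  irreflexive e /\ symmetric e.

Definition induced_rel (T : finType) (e : rel T) (S : {set T}) : rel T :=
  fun x y => [&& e x y, x \in S & y \in S].

Definition induces_connected (T : finType) (e : rel T) (S : {set T}) : bool :=
  (S != set0) && [forall x in S, forall y in S, connect (induced_rel e S) x y].

Definition induced_edges (T : finType) (e : rel T) (S : {set T}) : {set {set T}} :=
  [set f : {set T} | [exists x, exists y,
     [&& e x y, x \in S, y \in S & f == [set x; y]]]].

Definition edge_rel (T : finType) (F : {set {set T}}) : rel T :=
  fun x y => [set x; y] \in F.

Definition acyclic_edges (T : finType) (F : {set {set T}}) : bool :=
  [forall f in F, forall x, forall y,
     (f == [set x; y]) ==> ~~ connect (edge_rel (F :\ f)) x y].

Definition spanning_tree (T : finType) (e : rel T) (S : {set T})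
    (F : {set {set T}}) : bool :=
  [&& F \subset induced_edges e S,
      [forall x in S, forall y in S, connect (edge_rel F) x y]
    & acyclic_edges F].

Definition tau (T : finType) (e : rel T) (S : {set T}) : nat :=
  #|[set F : {set {set T}} | spanning_tree e S F]|.

Definition connected_partition (T : finType) (e : rel T) (k : nat)
    (P : {set {set T}}) : bool :=
  [&& partition P [set: T], #|P| == k & [forall S in P, induces_connected e S]].

Definition st_weight (T : finType) (e : rel T) (P : {set {set T}}) : nat :=
  \prod_(S in P) tau e S.

Definition W (T : finType) (e : rel T) (k : nat) : nat :=
  \sum_(P : {set {set T}} | connected_partition e k P) st_weight e P.

From mathcomp Require Import all_boot all_order all_algebra.
Import Order.TTheory GRing.Theory Num.Theory.
Set Implicit Arguments. Unset Strict Implicit. Unset Printing Implicit Defensive.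

(* W_k(G) is the number f_k of spanning forests of G with k components: such a
   forest amounts to a connected k-partition (its components) together with a
   spanning tree of each part; in particular f_1 = tau(G).  Adding to a k-forest
   an edge of G that joins two of its components yields a (k-1)-forest, and the
   pair (new forest, added edge) determines the old one, so f_k <= |E| f_(k-1);
   deleting an edge likewise gives f_k <= |E| f_(k+1).  As |E| <= n^2, iterating
   from k down to 1 bounds f_k / f_1 between n^(-2(k-1)) and n^(2(k-1)). *)

Lemma leq_card_in_sub (aT rT : finType) (A : {set aT}) (B : {set rT}) (f : aT -> rT) :
  {in A &, injective f} -> {in A, forall x, f x \in B} -> #|A| <= #|B|.
Proof.
move=> f_inj fAB; rewrite -(card_in_imset f_inj); apply: subset_leq_card.
by apply/subsetP => _ /imsetP[x xA ->]; apply: fAB.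
Qed.

Lemma connect_stable (T : finType) (R : rel T) (A : {pred T}) u v :
  (forall x y, R x y -> x \in A -> y \in A) -> u \in A -> connect R u v -> v \in A.
Proof.
move=> stA + /connectP[p Rp ->]; elim: p u Rp => //= y p IH x /andP[Rxy Rp] Ax.
exact: IH Rp (stA _ _ Rxy Ax).
Qed.

Lemma set2_eq_cases (T : finType) (a b c d : T) : [set a; b] = [set c; d] ->
  (a = c /\ b = d) \/ (a = d /\ b = c).
Proof.
move=> E.
have ha : a \in [set c; d] by rewrite -E set21.
have hb : b \in [set c; d] by rewrite -E set22.
have hc : c \in [set a; b] by rewrite E set21.
have hd : d \in [set a; b] by rewrite E set22.
move: hc hd; case/set2P: ha => ->; case/set2P: hb => -> hc hd.
- by rewrite setUid in hd; move/set1P: hd => ->; left.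
- by left.
- by right.
- by rewrite setUid in hc; move/set1P: hc => ->; left.
Qed.

Section EdgeSetConnectivity.
Variable T : finType.
Implicit Types (F : {set {set T}}) (A : {set T}) (u v x y a b : T).

Local Notation cn F := (connect (edge_rel F)).

Lemma edge_rel_sym F : symmetric (edge_rel F).
Proof. by move=> x y; rewrite /edge_rel setUC. Qed.

Lemma connect_edge_relC F x y : cn F x y = cn F y x.
Proof. exact: (sym_connect_sym (edge_rel_sym F)). Qed.

Lemma connect_edge_relS F F' x y : F' \subset F -> cn F' x y -> cn F x y.
Proof.
move=> sF'F; apply: connect_sub => p q pq; apply: connect1.
by rewrite /edge_rel (subsetP sF'F).
Qed.

Lemma connect_edge_relU1 F a b u v : cn ([set a; b] |: F) u v =
  cn F u v || ((cn F u a || cn F u b) && (cn F v a || cn F v b)).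
Proof.
have relU1 x y : edge_rel ([set a; b] |: F) x y = ([set x; y] == [set a; b]) || edge_rel F x y.
  by rewrite /edge_rel in_setU1.
apply/idP/idP => [uv | ].
  pose A := [pred w | cn F u w || ((cn F u a || cn F u b) && (cn F w a || cn F w b))].
  apply: (connect_stable (A := A) _ _ uv); last by rewrite inE connect0.
  move=> x y; rewrite relU1 !inE => /orP[/eqP/set2_eq_cases[[-> ->]|[-> ->]] | Fxy].
  - by case/orP => [->|/andP[-> _]]; rewrite connect0 ?orbT.
  - by case/orP => [->|/andP[-> _]]; rewrite connect0 ?orbT.
  - have Cxy : cn F x y := connect1 Fxy.
    have Cyx : cn F y x by rewrite connect_edge_relC.
    case/orP => [Cux|/andP[-> /orP[Cxa|Cxb]]].
    + by rewrite (connect_trans Cux Cxy).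
    + by rewrite (connect_trans Cyx Cxa) orbT.
    + by rewrite (connect_trans Cyx Cxb) !orbT.
have sub x y : cn F x y -> cn ([set a; b] |: F) x y.
  by apply: connect_sub => p q pq; apply: connect1; rewrite relU1 pq orbT.
have ab : cn ([set a; b] |: F) a b by apply: connect1; rewrite relU1 eqxx.
have ba : cn ([set a; b] |: F) b a by rewrite connect_edge_relC.
have va x : cn F v x -> cn ([set a; b] |: F) x v.
  by move=> vx; rewrite connect_edge_relC; apply: sub.
case/orP=> [/sub //|/andP[/orP[/sub ua|/sub ub] /orP[/va av|/va bv]]].
- exact: connect_trans ua av.
- exact: connect_trans ua (connect_trans ab bv).
- exact: connect_trans ub (connect_trans ba av).
- exact: connect_trans ub bv.
Qed.

Definition component F u := [set y in [set: T] | cn F u y].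
Definition components F := equivalence_partition (connect (edge_rel F)) [set: T].

Lemma componentsE F : components F = component F @: [set: T].
Proof. by []. Qed.

Lemma mem_component F u v : (v \in component F u) = cn F u v.
Proof. by rewrite !inE. Qed.

Lemma component_closed F u x y :
  [set x; y] \in F -> x \in component F u -> y \in component F u.
Proof. by rewrite !mem_component => xy ux; apply: connect_trans ux (connect1 _). Qed.

Lemma eq_component F u v : cn F u v -> component F u = component F v.
Proof.
move=> uv; apply/setP=> w; rewrite !mem_component; apply/idP/idP => [uw|].
- by apply: connect_trans uw; rewrite connect_edge_relC.
- exact: connect_trans uv.
Qed.

Lemma card_components0 : #|components set0| = #|T|.
Proof.
have c0 u v : cn set0 u v -> v = u.
  move=> uv; apply/eqP; apply: (connect_stable (A := pred1 u) _ _ uv); last exact: eqxx.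
  by move=> p q; rewrite /edge_rel inE.
rewrite componentsE card_in_imset ?cardsT // => u v _ _ E.
by apply: c0; rewrite -mem_component -E mem_component connect0.
Qed.

Lemma card_components_gt1 F : 1 < #|components F| -> exists u v, ~~ cn F u v.
Proof.
rewrite componentsE => /card_gt1P[_ [_ [/imsetP[u _ ->] /imsetP[v _ ->] ne]]].
by exists u, v; apply: contra ne => /eq_component ->.
Qed.

Lemma card_componentsU1 F a b : ~~ cn F a b ->
  #|components F| = (#|components ([set a; b] |: F)|).+1.
Proof.
move=> nab; set F1 := [set a; b] |: F.
set U := component F a :|: component F b.
have inU u : (u \in U) = (cn F u a || cn F u b).
  by rewrite !inE connect_edge_relC [cn F b u]connect_edge_relC.
have c1U u : u \in U -> component F1 u = U.
  move=> uU; apply/setP=> v; rewrite mem_component connect_edge_relU1 -!inU uU /=.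
  rewrite inU; apply/orb_idl; rewrite connect_edge_relC => vu.
  by move: uU; rewrite !inU => /orP[/(connect_trans vu)->|/(connect_trans vu)->]; rewrite ?orbT.
have c1nU u : u \notin U -> component F1 u = component F u.
  move=> uU; apply/setP=> v.
  by rewrite !mem_component connect_edge_relU1 -!inU (negbTE uU) orbF.
have c0U u : u \in U -> component F u = component F a \/ component F u = component F b.
  by rewrite inU => /orP[ua|ub]; [left|right]; apply: eq_component.
set B := component F @: (~: U).
have notB (X : {set T}) : X \subset U -> X \notin B.
  move=> XU; apply/imsetP => [[w]]; rewrite inE => wU EX.
  by move: wU; rewrite (subsetP XU) // EX mem_component connect0.
have splitT : [set: T] = U :|: ~: U by rewrite setUCr.
have E0 : components F = component F a |: (component F b |: B).
  rewrite componentsE splitT imsetU setUA; congr (_ :|: _).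
  apply/setP=> X; apply/imsetP/idP.
  - by case=> u /c0U [] -> ->; rewrite !inE eqxx ?orbT.
  - rewrite !inE => /orP[]/eqP->; [exists a|exists b] => //;
      by rewrite inU connect0 ?orbT.
have E1 : components F1 = U |: B.
  rewrite componentsE splitT imsetU; congr (_ :|: _).
  - apply/setP=> X; apply/imsetP/idP.
    + by case=> u /c1U -> ->; rewrite inE.
    + by move/set1P->; exists a; rewrite ?c1U // inU connect0.
  - by apply: eq_in_imset => u; rewrite inE => /c1nU.
rewrite E0 E1 !cardsU1 (notB _ (subsetUr _ _)) (notB _ (subxx U)).
rewrite !inE negb_or (notB _ (subsetUl _ _)) /=.
suff -> : component F a != component F b by [].
by apply: contra nab => /eqP Eab; rewrite -mem_component Eab mem_component connect0.
Qed.

Definition edges_within F A := [set f in F | f \subset A].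

Lemma edges_within_sub F A : edges_within F A \subset F.
Proof. by apply/subsetP => f; rewrite inE => /andP[]. Qed.

Lemma connect_edges_within F A u v :
  (forall x y, [set x; y] \in F -> x \in A -> y \in A) ->
  u \in A -> cn F u v -> cn (edges_within F A) u v && (v \in A).
Proof.
move=> stA uA uv.
apply: (connect_stable (A := [pred w | cn (edges_within F A) u w && (w \in A)]) _ _ uv).
  move=> p q pq; rewrite !inE => /andP[up pA]; have qA := stA _ _ pq pA.
  rewrite qA andbT; apply: connect_trans up (connect1 _); move: pq.
  by rewrite /edge_rel inE subUset !sub1set pA qA => ->.
by rewrite inE connect0.
Qed.

Lemma acyclic_edgesP F :
  reflect (forall x y, [set x; y] \in F -> ~~ cn (F :\ [set x; y]) x y) (acyclic_edges F).
Proof.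
apply: (iffP forallP) => [ac x y xyF | ac f].
  by move/implyP: (ac [set x; y]) => /(_ xyF)/forallP/(_ x)/forallP/(_ y); rewrite eqxx.
apply/implyP => fF; apply/forallP => x; apply/forallP => y.
by apply/implyP => /eqP Ef; subst f; apply: ac.
Qed.

Lemma acyclic_edgesS F F' : F' \subset F -> acyclic_edges F -> acyclic_edges F'.
Proof.
move=> sF'F /acyclic_edgesP ac; apply/acyclic_edgesP => x y xyF'.
by apply: contra (ac _ _ (subsetP sF'F _ xyF')); apply: connect_edge_relS; apply: setSD.
Qed.

End EdgeSetConnectivity.

Section InducedEdges.
Variables (T : finType) (e : rel T).
Implicit Types (S : {set T}) (f : {set T}) (a b : T).

Lemma induced_edgeP S f : f \in induced_edges e S ->
  exists a b, [/\ e a b, a \in S, b \in S & f = [set a; b]].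
Proof.
by rewrite inE => /existsP[a /existsP[b /and4P[eab aS bS /eqP ->]]]; exists a, b.
Qed.

Lemma mem_induced_edges S a b :
  e a b -> a \in S -> b \in S -> [set a; b] \in induced_edges e S.
Proof.
move=> eab aS bS; rewrite inE; apply/existsP; exists a; apply/existsP; exists b.
by rewrite eab aS bS eqxx.
Qed.

Lemma induced_edgesS S S' : S \subset S' -> induced_edges e S \subset induced_edges e S'.
Proof.
move=> sSS'; apply/subsetP => _ /induced_edgeP[a [b [eab aS bS ->]]].
by apply: mem_induced_edges; rewrite ?(subsetP sSS').
Qed.

Lemma induced_edge_sub S f : f \in induced_edges e S -> f \subset S.
Proof. by case/induced_edgeP => a [b [_ aS bS ->]]; rewrite subUset !sub1set aS bS. Qed.

Lemma induced_edge_neq0 S f : f \in induced_edges e S -> f != set0.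
Proof. by case/induced_edgeP => a [b [_ _ _ ->]]; apply/set0Pn; exists a; rewrite set21. Qed.

Lemma induced_edge_rel S a b : symmetric e -> [set a; b] \in induced_edges e S -> e a b.
Proof.
move=> e_sym /induced_edgeP[c [d [ecd _ _ /set2_eq_cases[[-> ->]|[-> ->]]]]] //.
by rewrite e_sym.
Qed.

Lemma card_induced_edges S : #|induced_edges e S| <= #|T| ^ 2.
Proof.
apply: (@leq_trans #|[set [set p.1; p.2] | p in [set: T * T]]|).
  apply: subset_leq_card; apply/subsetP => _ /induced_edgeP[a [b [_ _ _ ->]]].
  by apply/imsetP; exists (a, b); rewrite ?inE.
by apply: leq_trans (leq_imset_card _ _) _; rewrite cardsT card_prod.
Qed.

End InducedEdges.

Section SpanningForests.
Variables (T : finType) (e : rel T).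
Hypothesis e_sym : symmetric e.
Implicit Types (F : {set {set T}}) (u v x y a b : T).

Local Notation cn F := (connect (edge_rel F)).
Local Notation E := (induced_edges e [set: T]).

Definition spanning_forest F := (F \subset E) && acyclic_edges F.

Definition forests k := [set F | spanning_forest F && (#|components F| == k)].

Lemma set0_forests : set0 \in forests #|T|.
Proof.
rewrite inE card_components0 eqxx andbT /spanning_forest sub0set.
by apply/acyclic_edgesP => x y; rewrite inE.
Qed.

Lemma spanning_forestU1 F a b : spanning_forest F -> e a b -> ~~ cn F a b ->
  spanning_forest ([set a; b] |: F).
Proof.
case/andP=> sFE /acyclic_edgesP ac eab nab; apply/andP; split.
  by rewrite subUset sub1set mem_induced_edges ?inE.
have abF : [set a; b] \notin F by apply: contra nab => abF; apply: connect1.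
apply/acyclic_edgesP => x y; rewrite in_setU1 => /orP[/eqP Exy|xyF].
  rewrite Exy setU1K //; case/set2_eq_cases: Exy => [[-> ->]|[-> ->]] //.
  by rewrite connect_edge_relC.
have -> : ([set a; b] |: F) :\ [set x; y] = [set a; b] |: (F :\ [set x; y]).
  have ne : [set x; y] != [set a; b] by apply: contraNneq abF => <-.
  by apply/setP=> f; rewrite !inE; case: (f =P [set x; y]) => //= ->; rewrite (negbTE ne).
rewrite connect_edge_relU1 negb_or ac //=.
have sD : F :\ [set x; y] \subset F by apply: subsetDl.
have cxy : cn F x y by apply: connect1.
apply/negP=> /andP[/orP[xa|xb] /orP[ya|yb]].
- by move: (ac _ _ xyF); rewrite (connect_trans xa) // connect_edge_relC.
- move: nab; rewrite (connect_trans (connect_trans _ cxy) (connect_edge_relS sD yb)) //.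
  by rewrite connect_edge_relC (connect_edge_relS sD xa).
- move: nab; rewrite connect_edge_relC.
  rewrite (connect_trans (connect_trans _ cxy) (connect_edge_relS sD ya)) //.
  by rewrite connect_edge_relC (connect_edge_relS sD xb).
- by move: (ac _ _ xyF); rewrite (connect_trans xb) // connect_edge_relC.
Qed.

Lemma card_forests_le_succ k : k < #|T| -> #|forests k| <= #|forests k.+1| * #|E|.
Proof.
move=> kn; rewrite -cardsX; pose pick_edge F := odflt set0 [pick f in F].
have pick_edgeP F : F \in forests k -> pick_edge F \in F.
  rewrite inE => /andP[_ /eqP cF]; rewrite /pick_edge; case: pickP => [f -> //| none].
  have F0 : F = set0 by apply/setP => f; rewrite inE; apply: none.
  by move: kn; rewrite -cF F0 card_components0 ltnn.
apply: (@leq_card_in_sub _ _ _ _ (fun F => (F :\ pick_edge F, pick_edge F))).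
  move=> F1 F2 /pick_edgeP F1f /pick_edgeP F2f [] ED Ef.
  by rewrite -(setD1K F1f) -(setD1K F2f) ED Ef.
move=> F FX; have := pick_edgeP F FX; move: FX; rewrite inE => /andP[/andP[sFE ac] /eqP cF].
move: (pick_edge F) => f fF; have /induced_edgeP[a [b [_ _ _ Ef]]] := subsetP sFE _ fF.
subst f; apply/setXP; split; last exact: subsetP sFE _ fF.
have nab := acyclic_edgesP _ ac _ _ fF.
rewrite inE /spanning_forest (subset_trans (subsetDl _ _) sFE).
by rewrite (acyclic_edgesS (subsetDl _ _) ac) /= (card_componentsU1 nab) setD1K // cF.
Qed.

Hypothesis G_connected : induces_connected e [set: T].

Lemma exists_joining_edge F : 1 < #|components F| -> exists a b, e a b && ~~ cn F a b.
Proof.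
case/card_components_gt1 => u [v nuv].
case: (boolP [exists a, exists b, e a b && ~~ cn F a b]) => [|/existsPn none].
  by case/existsP => a /existsP[b ab]; exists a, b.
case/andP: G_connected => _ /forall_inP/(_ u (in_setT _))/forall_inP/(_ v (in_setT _)) uv.
case/negP: nuv; rewrite -mem_component.
apply: (connect_stable _ _ uv); last by rewrite mem_component connect0.
move=> x y /andP[exy _]; rewrite !mem_component => ux; apply: connect_trans ux _.
by move/existsPn: (none x) => /(_ y); rewrite exy negbK.
Qed.

Definition joining_edge F :=
  odflt set0 [pick f in E | [exists a, exists b, (f == [set a; b]) && ~~ cn F a b]].

Lemma joining_edgeP F : 1 < #|components F| ->
  exists a b, [/\ e a b, ~~ cn F a b & joining_edge F = [set a; b]].
Proof.
move=> /exists_joining_edge[a0 [b0 /andP[eab0 nab0]]].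
rewrite /joining_edge; case: pickP => [f /andP[fE] | none].
  case/existsP => a /existsP[b /andP[/eqP Ef nab]].
  by exists a, b; split => //; apply: (induced_edge_rel (S := [set: T]) e_sym); rewrite -Ef.
move: (none [set a0; b0]); rewrite mem_induced_edges ?inE //= => /negbT/negP[].
by apply/existsP; exists a0; apply/existsP; exists b0; rewrite eqxx.
Qed.

Lemma card_forests_le_pred k : 1 < k -> #|forests k| <= #|forests k.-1| * #|E|.
Proof.
move=> k1; rewrite -cardsX.
have joinP F : F \in forests k ->
    exists a b, [/\ e a b, ~~ cn F a b & joining_edge F = [set a; b]].
  by rewrite inE => /andP[_ /eqP cF]; apply: joining_edgeP; rewrite cF.
apply: (@leq_card_in_sub _ _ _ _ (fun F => (joining_edge F |: F, joining_edge F))).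
  move=> F1 F2 /joinP[a1 [b1 [_ n1 E1]]] /joinP[a2 [b2 [_ n2 E2]]] [EU Ej].
  have notin F' c d : ~~ cn F' c d -> [set c; d] \notin F'.
    by apply: contra => cdF'; apply: connect1.
  by rewrite -(setU1K (notin _ _ _ n1)) -E1 EU Ej E2 setU1K ?notin.
move=> F FX; have [a [b [eab nab Ej]]] := joinP F FX.
move: FX; rewrite inE => /andP[fF /eqP cF].
apply/setXP; rewrite Ej mem_induced_edges ?inE ?spanning_forestU1 //=; split => //.
by move: (card_componentsU1 nab); rewrite cF => ->.
Qed.

End SpanningForests.

Section ForestDecomposition.
Variables (T : finType) (e : rel T).
Hypothesis e_sym : symmetric e.
Implicit Types (F P : {set {set T}}) (S : {set T}) (u v x y : T).

Local Notation cn F := (connect (edge_rel F)).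

Definition forests_on P := [set F : {set {set T}} | [forall f in F, exists S in P, f \subset S] &&
                                    [forall S in P, spanning_tree e S (edges_within F S)]].

Lemma forests_onP P F :
  reflect ((forall f, f \in F -> exists2 S, S \in P & f \subset S) /\
           (forall S, S \in P -> spanning_tree e S (edges_within F S)))
          (F \in forests_on P).
Proof.
rewrite inE; apply: (iffP andP) => [[/forall_inP blk /forall_inP st]|[blk st]].
  by split=> // f /blk /exists_inP[S SP fS]; exists S.
split; apply/forall_inP => // f /blk[S SP fS]; apply/exists_inP; exists S => //.
Qed.

Lemma connect_forests_on P F u v : partition P [set: T] -> F \in forests_on P ->
  cn F u v = (v \in pblock P u).
Proof.
case/and3P=> /eqP covP tiP _ /forests_onP[blk st].
have uP : u \in cover P by rewrite covP.
apply/idP/idP => [uv|vu].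
  apply: (connect_stable _ _ uv); last by rewrite mem_pblock.
  move=> x y /blk[S SP]; rewrite subUset !sub1set => /andP[xS yS] xu.
  by rewrite -(same_pblock tiP xu) (def_pblock tiP SP xS).
have uu : u \in pblock P u by rewrite mem_pblock.
case/and3P: (st _ (pblock_mem uP)) => _ /forall_inP/(_ u uu)/forall_inP/(_ v vu) uvS _.
exact: connect_edge_relS (edges_within_sub _ _) uvS.
Qed.

Lemma forests_on_spanning_forest P F : partition P [set: T] -> F \in forests_on P ->
  spanning_forest e F && (components F == P).
Proof.
move=> partP FP; have /and3P[_ tiP _] := partP.
have cnF u v := connect_forests_on u v partP FP; case/forests_onP: FP => blk st.
have -> : components F == P.
  apply/eqP; rewrite /components -[RHS](equivalence_partition_pblock partP).
  by apply: eq_imset => x; apply/setP => y; rewrite !inE cnF.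
rewrite /spanning_forest andbT; apply/andP; split.
  apply/subsetP => f fF; case: (blk f fF) => S SP fS; case/and3P: (st S SP) => sFS _ _.
  by apply: (subsetP (induced_edgesS _ (subsetT S))); apply: (subsetP sFS); rewrite inE fF.
apply/acyclic_edgesP => x y xyF; apply/negP => xy.
case: (blk _ xyF) => S SP; rewrite subUset !sub1set => /andP[xS yS].
case/and3P: (st S SP) => _ _ /acyclic_edgesP acS.
have xyS : [set x; y] \in edges_within F S by rewrite inE xyF subUset !sub1set xS yS.
apply: (negP (acS _ _ xyS)).
have stS p q : [set p; q] \in F :\ [set x; y] -> p \in S -> q \in S.
  rewrite in_setD1 => /andP[_ /blk[S' S'P]]; rewrite subUset !sub1set => /andP[pS' qS'] pS.
  by rewrite -(def_pblock tiP SP pS) (def_pblock tiP S'P pS').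
case/andP: (connect_edges_within stS xS xy) => cnS _.
by apply: connect_edge_relS cnS; apply/subsetP => f; rewrite !inE andbA.
Qed.

Lemma spanning_forest_forests_on F : spanning_forest e F -> F \in forests_on (components F).
Proof.
case/andP=> sFE ac; apply/forests_onP; split => [f fF | _ /imsetP[u _ ->]].
  case/induced_edgeP: (subsetP sFE _ fF) => a [b [eab _ _ Ef]].
  exists (component F a); first by rewrite componentsE imset_f ?inE.
  by rewrite Ef subUset !sub1set !mem_component connect0 connect1 // /edge_rel -Ef.
apply/and3P; split.
- apply/subsetP => f; rewrite inE => /andP[fF fS].
  case/induced_edgeP: (subsetP sFE _ fF) => a [b [eab _ _ Ef]].
  by move: fS; rewrite Ef subUset !sub1set => /andP[aS bS]; apply: mem_induced_edges.
- apply/forall_inP => v vS; apply/forall_inP => w wS.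
  have vw : cn F v w.
    by move: vS wS; rewrite !mem_component connect_edge_relC; apply: connect_trans.
  by case/andP: (connect_edges_within (@component_closed _ F u) vS vw).
- exact: acyclic_edgesS (edges_within_sub _ _) ac.
Qed.

Lemma mem_forests_on P F : partition P [set: T] ->
  (F \in forests_on P) = spanning_forest e F && (components F == P).
Proof.
move=> partP; apply/idP/andP => [/(forests_on_spanning_forest partP)/andP//|[fF /eqP <-]].
exact: spanning_forest_forests_on.
Qed.

Lemma forest_components_partition F : spanning_forest e F ->
  connected_partition e #|components F| (components F).
Proof.
case/andP=> sFE _; rewrite /connected_partition eqxx equivalence_partitionP /=; last first.
  move=> x y z _ _ _; split=> [|xy]; first exact: connect0.
  by apply/idP/idP; apply: connect_trans; rewrite // connect_edge_relC.
apply/forall_inP => _ /imsetP[u _ ->]; apply/andP; split.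
  by apply/set0Pn; exists u; rewrite mem_component connect0.
apply/forall_inP => v vS; apply/forall_inP => w wS.
have vw : cn F v w.
  by move: vS wS; rewrite !mem_component connect_edge_relC; apply: connect_trans.
case/andP: (connect_edges_within (@component_closed _ F u) vS vw) => vwS _.
apply: connect_sub vwS => p q; rewrite /edge_rel inE => /andP[pqF].
rewrite subUset !sub1set => /andP[pS qS]; apply: connect1.
by rewrite /induced_rel pS qS andbT (induced_edge_rel e_sym (subsetP sFE _ pqF)).
Qed.

Lemma bigcup_edges_within P F : (forall f, f \in F -> exists2 S, S \in P & f \subset S) ->
  \bigcup_(S in P) edges_within F S = F.
Proof.
move=> blk; apply/setP => f; apply/bigcupP/idP => [[S _]|fF]; first by rewrite inE => /andP[].
by case: (blk f fF) => S SP fS; exists S; rewrite // inE fF.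
Qed.

Lemma edges_within_bigcup P (g : {set T} -> {set {set T}}) S : trivIset P ->
  (forall S, S \in P -> g S \subset induced_edges e S) -> S \in P ->
  edges_within (\bigcup_(S in P) g S) S = g S.
Proof.
move=> tiP gE SP; apply/setP => f; rewrite inE; apply/andP/idP => [[]|fg].
  case/bigcupP => S' S'P fg' fS; have fE := subsetP (gE S' S'P) _ fg'.
  case/set0Pn: (induced_edge_neq0 fE) => z zf.
  have zS' := subsetP (induced_edge_sub fE) _ zf.
  suff -> : S = S' by [].
  by rewrite -(def_pblock tiP SP (subsetP fS _ zf)) (def_pblock tiP S'P zS').
by split; [apply/bigcupP; exists S | exact: induced_edge_sub (subsetP (gE S SP) _ fg)].
Qed.

Lemma card_forests_on P : trivIset P -> #|forests_on P| = \prod_(S in P) tau e S.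
Proof.
move=> tiP; pose trees S := [set F : {set {set T}} | spanning_tree e S F].
pose restrict F := [ffun S => if S \in P then edges_within F S else set0].
have -> : \prod_(S in P) tau e S = #|pfamily set0 P trees|.
  by rewrite card_pfamily foldrE big_image.
rewrite -(card_in_imset (f := restrict)); last first.
  move=> F1 F2 /forests_onP[blk1 _] /forests_onP[blk2 _] E12.
  rewrite -(bigcup_edges_within blk1) -(bigcup_edges_within blk2); apply: eq_bigr => S SP.
  by move/ffunP/(_ S): E12; rewrite !ffunE SP.
apply: eq_card => g; apply/imsetP/idP => [[F /forests_onP[_ st] ->]|].
  apply/pfamilyP; split; last by move=> S SP; rewrite ffunE SP inE; apply: st.
  by apply/subsetP => S; rewrite !inE ffunE; case: (S \in P); rewrite ?eqxx.
case/pfamilyP => /subsetP supp fam.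
have gS S : S \in P -> spanning_tree e S (g S) by move=> SP; have := fam S SP; rewrite inE.
have gE S : S \in P -> g S \subset induced_edges e S by case/gS/and3P.
exists (\bigcup_(S in P) g S).
  apply/forests_onP; split => [f /bigcupP[S SP fg]|S SP].
    by exists S; last exact: induced_edge_sub (subsetP (gE S SP) _ fg).
  by rewrite edges_within_bigcup //; apply: gS.
apply/ffunP => S; rewrite ffunE; case: ifP => SP; first by rewrite edges_within_bigcup.
by move: (supp S); rewrite !inE SP; case: eqP => [->|_ /(_ isT)].
Qed.

Lemma W_card_forests k : W e k = #|forests e k|.
Proof.
rewrite /W -sum1dep_card [RHS](partition_big (@components T) (connected_partition e k)); last first.
  by move=> F /andP[fF /eqP <-]; apply: forest_components_partition.
apply: eq_bigr => P /and3P[partP /eqP cardP _]; have /and3P[_ tiP _] := partP.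
rewrite /st_weight -card_forests_on // sum1dep_card; apply: eq_card => F.
rewrite mem_forests_on // inE -andbA; congr (_ && _).
by apply/idP/andP => [/eqP EP|[]//]; rewrite EP cardP.
Qed.

End ForestDecomposition.

Section ForestCounts.
Variables (T : finType) (e : rel T).
Hypotheses (e_sym : symmetric e) (G_connected : induces_connected e [set: T]).

Local Notation n := #|T|.

Lemma card_forests_ub j : 0 < j <= n -> #|forests e j| <= (n ^ 2) ^ j.-1 * #|forests e 1|.
Proof.
elim: j => // j IH /andP[_ jn]; case: (posnP j) => [-> | j_gt0]; first by rewrite mul1n.
apply: leq_trans (card_forests_le_pred e_sym G_connected _) _; first by rewrite ltnS.
apply: leq_trans (leq_mul (IH _) (card_induced_edges e _)) _; first by rewrite j_gt0 ltnW.
by rewrite mulnAC -expnSr prednK.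
Qed.

Lemma card_forests_lb j : 0 < j <= n -> #|forests e 1| <= (n ^ 2) ^ j.-1 * #|forests e j|.
Proof.
elim: j => // j IH /andP[_ jn]; case: (posnP j) => [-> | j_gt0]; first by rewrite mul1n.
apply: leq_trans (IH _) _; first by rewrite j_gt0 ltnW.
apply: leq_trans (leq_mul (leqnn _) (card_forests_le_succ e jn)) _.
apply: leq_trans (leq_mul (leqnn _) (leq_mul (leqnn _) (card_induced_edges e _))) _.
by rewrite [_ * n ^ 2]mulnC mulnA -expnSr prednK.
Qed.

Lemma card_forests1_gt0 : 0 < #|forests e 1|.
Proof.
have n_gt0 : 0 < n by case/andP: G_connected => /set0Pn[u _] _; apply/card_gt0P; exists u.
have nn : 0 < n <= n by rewrite n_gt0 leqnn.
have Xn_gt0 : 0 < #|forests e n| by apply/card_gt0P; exists set0; apply: set0_forests.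
by have := leq_trans Xn_gt0 (card_forests_ub nn); rewrite muln_gt0 => /andP[].
Qed.

Lemma W1_tau : W e 1 = tau e [set: T].
Proof.
rewrite /W (big_pred1 [set [set: T]]) /st_weight ?big_set1 // => P /=.
apply/idP/eqP => [/and3P[/and3P[/eqP covP _ _] /cards1P[S PS] _] | ->].
  by move: covP; rewrite PS cover1 => ->.
rewrite /connected_partition /partition cover1 trivIset1 cards1 eqxx /=.
case/andP: (G_connected) => T_neq0 _; rewrite inE eq_sym T_neq0.
by apply/forall_inP => S /set1P ->.
Qed.

Lemma W_tau_bounds k : 0 < k <= n ->
  W e k <= (n ^ 2) ^ k.-1 * tau e [set: T] /\ tau e [set: T] <= (n ^ 2) ^ k.-1 * W e k.
Proof.
by move=> kn; rewrite -W1_tau !W_card_forests // card_forests_ub // card_forests_lb.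
Qed.

Lemma tau_gt0 : 0 < tau e [set: T].
Proof. by rewrite -W1_tau W_card_forests // card_forests1_gt0. Qed.

End ForestCounts.

Local Open Scope ring_scope.

Theorem mainTheorem8 (T : finType) (e : rel T) (k : nat) :
  simple_graph e ->
  induces_connected e [set: T] ->
  (1 <= k)%N -> (k <= #|T|)%N ->
  ((#|T|%:R : rat) ^- (2 * (k - 1)) <= (W e k)%:R / (tau e [set: T])%:R)
  /\ ((W e k)%:R / (tau e [set: T])%:R <= (#|T|%:R : rat) ^+ (2 * (k - 1))).
Proof.
move=> [_ e_sym] G_connected k_gt0 k_le_n.
have k_range : (0 < k <= #|T|)%N by rewrite k_gt0.
have [W_le tau_le] := W_tau_bounds e_sym G_connected k_range.
have tau_pos : 0 < (tau e [set: T])%:R :> rat by rewrite ltr0n tau_gt0.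
have pow_pos : 0 < ((#|T| ^ 2) ^ k.-1)%:R :> rat.
  by rewrite ltr0n !expn_gt0 (leq_trans k_gt0 k_le_n).
rewrite -natrX expnM subn1; split.
- by rewrite ler_pdivlMr // mulrC ler_pdivrMr // -natrM ler_nat mulnC.
- by rewrite ler_pdivrMr // -natrM ler_nat.
Qed.
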